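(* There exists a $3$-partite $3$-uniform hypergraph $\mathcal{H}$ such that for every pair of vertices $p,q$ of $\mathcal{H}$, deleting $p$ and $q$ does not reduce the matching number, i.e. $\nu(\mathcal{H}-\{p,q\})=\nu(\mathcal{H})$.
   Context: An $r$-partite $r$-uniform hypergraph has a vertex set partitioned into $r$ parts $V_1,\dots,V_r$ and a set of edges, each edge containing exactly one vertex from each part. A matching is a set of pairwise disjoint edges; $\nu(\mathcal{H})$ is the maximum size of a matching. Deleting a set $S$ of vertices from $\mathcal{H}$ means removing the vertices of $S$ together with all edges containing a vertex of $S$; the result is denoted $\mathcal{H}-S$. *)

From mathcomp Require Import all_boot.
Set Implicit Arguments. Unset Strict Implicit. Unset Printing Implicit Defensive.

(* An r-partite r-uniform hypergraph on a finite vertex type V is given by a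
   partition map [part : V -> 'I_r] (vertex v lies in part V_(part v)) and an
   edge set [E : {set {set V}}] in which every edge contains exactly one
   vertex of each part. *)
Definition partite_edge (V : finType) (r : nat) (part : V -> 'I_r)
  (e : {set V}) : bool :=
  [forall i : 'I_r, #|[set v in e | part v == i]| == 1].

Definition partite_uniform (V : finType) (r : nat) (part : V -> 'I_r)
  (E : {set {set V}}) : bool :=
  [forall e in E, partite_edge part e].

Definition is_matching (V : finType) (E M : {set {set V}}) : bool :=
  (M \subset E) &&
  [forall e1 in M, forall e2 in M, (e1 != e2) ==> [disjoint e1 & e2]].

Definition nu (V : finType) (E : {set {set V}}) : nat :=
  \max_(M in powerset E | is_matching E M) #|M|.

(* H - S: remove the vertices of S and every edge containing one of them.
   (We keep the vertex type; removed vertices are isolated and irrelevant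
   for matchings.) *)
Definition delete_vertices (V : finType) (E : {set {set V}}) (S : {set V})
  : {set {set V}} :=
  [set e in E | [disjoint e & S]].

From mathcomp Require Import all_boot zmodp.
Set Implicit Arguments. Unset Strict Implicit. Unset Printing Implicit Defensive.

(* The example has five vertices in each part and the 13 edges
   {(0,a), (1,b), (2,c)} for the rows [a; b; c] of [example_rows]. No four of
   its edges are pairwise disjoint, so nu <= 3, while for any two vertices
   three pairwise disjoint edges avoid both of them, so deleting the two
   vertices leaves nu >= 3; since deletion cannot increase nu, both are 3.
   Once matchings of an injectively indexed hypergraph are identified with
   sets of pairwise disjoint indices, both facts are finite checks on
   sequences of indices, evaluated by [vm_compute]. *)

Section Matchings.
Variable V : finType.
Implicit Types (E F M : {set {set V}}) (S : {set V}).

Lemma matchingP E M :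
  reflect (M \subset E /\
           {in M &, forall e1 e2 : {set V}, e1 != e2 -> [disjoint e1 & e2]})
          (is_matching E M).
Proof.
apply: (iffP andP) => [[sME /forall_inP mM] | [sME mM]]; split => //.
  by move=> e1 e2 /mM /forall_inP m1 /m1 /implyP.
apply/forall_inP => e1 /mM m1; apply/forall_inP => e2 /m1 ?; exact/implyP.
Qed.

Lemma matching_card_le_nu E M : is_matching E M -> #|M| <= nu E.
Proof.
move=> mM; apply: leq_bigmax_cond; rewrite powersetE mM andbT.
by case/matchingP: mM.
Qed.

Lemma nuS E F : F \subset E -> nu F <= nu E.
Proof.
move=> sFE; apply/bigmax_leqP => M /andP[_ /matchingP[sMF mM]].
by apply/matching_card_le_nu/matchingP; split; first exact: subset_trans sFE.
Qed.

Lemma delete_vertices_subset E S : delete_vertices E S \subset E.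
Proof. by apply/subsetP => e; rewrite inE => /andP[]. Qed.

End Matchings.

Section IndexedEdges.
Variables (I V : finType) (edge : I -> {set V}).

Lemma delete_vertices_imset (A : {set I}) (S : {set V}) :
  delete_vertices (edge @: A) S = edge @: [set k in A | [disjoint edge k & S]].
Proof.
apply/setP => e; rewrite inE; apply/andP/imsetP => [[/imsetP[k kA ->] dS] | [k]].
  by exists k; rewrite // inE kA.
by rewrite inE => /andP[kA dS] ->; rewrite imset_f.
Qed.

Hypothesis edge_inj : injective edge.

Lemma nu_imset_ge (A K : {set I}) :
    K \subset A -> {in K &, forall k l, k != l -> [disjoint edge k & edge l]} ->
  #|K| <= nu (edge @: A).
Proof.
move=> sKA disjK; rewrite -(card_imset _ edge_inj); apply: matching_card_le_nu.
apply/matchingP; split; first exact: imsetS.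
move=> _ _ /imsetP[k kK ->] /imsetP[l lK ->] kl.
by apply: disjK => //; apply: contraNneq kl => ->.
Qed.

Lemma nu_imset_le (A : {set I}) n :
    (forall K : {set I}, K \subset A ->
       {in K &, forall k l, k != l -> [disjoint edge k & edge l]} -> #|K| <= n) ->
  nu (edge @: A) <= n.
Proof.
move=> bound; apply/bigmax_leqP => M /andP[_ /matchingP[sME mM]].
pose K := A :&: edge @^-1: M.
have -> : M = edge @: K.
  apply/setP => e; apply/idP/imsetP => [eM | [k]].
    have /imsetP[k kA ek] := subsetP sME e eM.
    by exists k; rewrite // !inE kA -ek.
  by rewrite !inE => /andP[_ kM] ->.
rewrite card_imset //; apply: bound; first exact: subsetIl.
move=> k l; rewrite !inE => /andP[_ kM] /andP[_ lM] kl.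
by apply: mM; rewrite // (inj_eq edge_inj).
Qed.

End IndexedEdges.

Lemma disjoints2 (T : finType) (A : {set T}) p q :
  [disjoint A & [set p; q]] = (p \notin A) && (q \notin A).
Proof.
rewrite disjoint_sym (@eq_disjoint _ [set p; q] (mem [:: p; q])) => [|v].
  by rewrite disjoint_has /= orbF negb_or.
by rewrite !inE.
Qed.

Section Transversals.
Variables (r : nat) (T : finType).
Implicit Types f g : 'I_r -> T.

Definition transversal f : {set 'I_r * T} := [set (i, f i) | i : 'I_r].

Lemma mem_transversal f v : (v \in transversal f) = (f v.1 == v.2).
Proof.
case: v => i x; apply/imsetP/eqP => [[j _ [-> ->]] // | /= <-].
by exists i.
Qed.

Lemma transversal_inj f g : transversal f = transversal g -> f =1 g.
Proof.
move=> fg i; apply/eqP.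
by rewrite -(mem_transversal f (i, g i)) fg mem_transversal.
Qed.

Lemma partite_edge_transversal f : partite_edge (@fst 'I_r T) (transversal f).
Proof.
rewrite /partite_edge; apply/forallP => i; apply/cards1P; exists (i, f i).
apply/setP => -[j x]; rewrite !inE mem_transversal xpair_eqE /=.
by case: (j =P i) => [-> | _]; rewrite ?andbT ?andbF // eq_sym.
Qed.

Lemma disjoint_transversal f g :
  [disjoint transversal f & transversal g] = [forall i, f i != g i].
Proof.
apply/idP/forallP => [fg i | fg].
  apply: contraTneq fg => fgi; apply/pred0Pn; exists (i, f i).
  by rewrite /= !mem_transversal fgi !eqxx.
rewrite -setI_eq0; apply/eqP/setP => -[i x]; rewrite !inE !mem_transversal /=.
by apply/negbTE; apply: contraNN (fg i) => /andP[/eqP-> /eqP->].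
Qed.

End Transversals.

Lemma pairwise_inP (T : eqType) (r : rel T) (s : seq T) :
    symmetric r -> uniq s ->
  reflect {in s &, forall x y, x != y -> r x y} (pairwise r s).
Proof.
move=> rC; elim: s => [_ | x s IHs /= /andP[xNs /IHs {}IHs]]; first by left.
apply: (iffP andP) => [[/allP rx /IHs rs] y z | r_in].
  rewrite !inE => /predU1P[-> | ys] /predU1P[-> | zs]; rewrite ?eqxx // => yz.
  - exact: rx.
  - by rewrite rC; apply: rx.
  - exact: rs.
split; last by apply/IHs => y z ys zs; apply: r_in; rewrite inE ?ys ?zs orbT.
apply/allP => y ys; apply: r_in; rewrite ?inE ?eqxx ?ys ?orbT //.
by apply: contraNneq xNs => ->.
Qed.

Fixpoint words (T : Type) (s : seq T) (n : nat) : seq (seq T) :=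
  if n is n'.+1 then [seq x :: w | x <- s, w <- words s n'] else [:: [::]].

Lemma mem_words (T : eqType) (s : seq T) n w :
  (w \in words s n) = (size w == n) && all (mem s) w.
Proof.
elim: n w => [|n IHn] [|x w] /=; rewrite ?inE //.
  by apply/allpairsP => -[[y v] []].
rewrite eqSS andbCA -IHn.
apply/allpairsP/andP => [[[y v] /= [ys vw [-> ->]]] | [xs ws]] //.
by exists (x, w).
Qed.

Lemma pairwise_size_leq (T : eqType) (r : rel T) (s w : seq T) n :
    all (fun v => ~~ pairwise r v) (words s n.+1) ->
  {subset w <= s} -> pairwise r w -> size w <= n.
Proof.
move=> /allP noR ws rw; rewrite leqNgt; apply/negP => nw.
have /noR/negP[] : take n.+1 w \in words s n.+1.
  rewrite mem_words size_takel // eqxx; apply/allP => x /mem_take; exact: ws.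
exact: subseq_pairwise (take_subseq _ _) rw.
Qed.

(* [inZp] instead of [inord], [enum] or [ord_enum]: those are blocked by the
   opaque [idP] inside [insub] (or by the sealed [card]), so [vm_compute]
   could not evaluate the checks below. *)
Definition ord_seq n : seq 'I_n.+1 := mkseq inZp n.+1.

Lemma mem_ord_seq n (i : 'I_n.+1) : i \in ord_seq n.
Proof. by apply/mapP; exists (val i); rewrite ?valZpK // mem_iota ltn_ord. Qed.

Definition example_rows : seq (seq nat) :=
  [:: [:: 0; 0; 2]; [:: 0; 4; 0]; [:: 1; 1; 2]; [:: 1; 2; 3]; [:: 1; 3; 0];
      [:: 2; 0; 3]; [:: 2; 4; 2]; [:: 3; 1; 4]; [:: 3; 2; 0]; [:: 3; 4; 1];
      [:: 4; 0; 4]; [:: 4; 1; 1]; [:: 4; 3; 3]].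

Definition edge_fun (k : 'I_13) (i : 'I_3) : 'I_5 :=
  inZp (nth 0 (nth [::] example_rows k) i).

Definition edge (k : 'I_13) : {set 'I_3 * 'I_5} := transversal (edge_fun k).

Definition H : {set {set 'I_3 * 'I_5}} := edge @: setT.

Definition apart (k l : 'I_13) : bool :=
  all (fun i => edge_fun k i != edge_fun l i) (ord_seq 2).

Definition misses (p : 'I_3 * 'I_5) (k : 'I_13) : bool :=
  edge_fun k p.1 != p.2.

Lemma edge_inj : injective edge.
Proof.
move=> k l /transversal_inj same; apply/eqP.
have /allP/(_ k (mem_ord_seq k))/allP/(_ l (mem_ord_seq l)) :
    all (fun k => all (fun l =>
      (k == l) || has (fun i => edge_fun k i != edge_fun l i) (ord_seq 2))
    (ord_seq 12)) (ord_seq 12)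
  by vm_compute.
by case/orP => // /hasP[i _]; rewrite same eqxx.
Qed.

Lemma disjoint_edge k l : [disjoint edge k & edge l] = apart k l.
Proof.
rewrite disjoint_transversal; apply/forallP/allP => [kl i _ | kl i] //.
exact: kl (mem_ord_seq i).
Qed.

Lemma disjoint_edge2 k p q :
  [disjoint edge k & [set p; q]] = misses p k && misses q k.
Proof. by rewrite disjoints2 !mem_transversal. Qed.

Lemma apart_sym : symmetric apart.
Proof. by move=> k l; rewrite -!disjoint_edge disjoint_sym. Qed.

Lemma apart_irr : irreflexive apart.
Proof. by move=> k; rewrite /apart /= eqxx. Qed.

Lemma no_four_apart : all (fun t => ~~ pairwise apart t) (words (ord_seq 12) 4).
Proof. by vm_compute. Qed.

Lemma three_apart_missing p q :
  has (pairwise apart) (words [seq k <- ord_seq 12 | misses p k && misses q k] 3).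
Proof.
have mem_vertices v : v \in [seq (i, x) | i <- ord_seq 2, x <- ord_seq 4].
  by case: v => i x; apply: allpairs_f; apply: mem_ord_seq.
have /allP/(_ p (mem_vertices p))/allP/(_ q (mem_vertices q)) // :
    all (fun p => all (fun q =>
      has (pairwise apart) (words [seq k <- ord_seq 12 | misses p k && misses q k] 3))
    [seq (i, x) | i <- ord_seq 2, x <- ord_seq 4])
    [seq (i, x) | i <- ord_seq 2, x <- ord_seq 4]
  by vm_compute.
Qed.

Lemma nu_H_le3 : nu H <= 3.
Proof.
apply: (nu_imset_le edge_inj) => K _ disjK.
rewrite cardE; apply: (pairwise_size_leq no_four_apart) => [k _ | ].
  exact: mem_ord_seq.
apply/(pairwise_inP apart_sym (enum_uniq _)) => k l; rewrite !mem_enum => kK lK kl.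
by rewrite -disjoint_edge disjK.
Qed.

Lemma nu_delete2_ge3 p q : 3 <= nu (delete_vertices H [set p; q]).
Proof.
have /hasP[t] := three_apart_missing p q.
rewrite mem_words => /andP[/eqP size_t /allP t_miss] apart_t.
have uniq_t := pairwise_uniq apart_irr apart_t.
apply: (@leq_trans #|[set k in t]|); first by rewrite cardsE (card_uniqP uniq_t) size_t.
rewrite delete_vertices_imset.
apply: (nu_imset_ge edge_inj).
  apply/subsetP => k; rewrite !inE disjoint_edge2 => /t_miss.
  by rewrite inE mem_filter => /andP[].
move=> k l; rewrite !inE disjoint_edge => kt lt.
exact: (pairwise_inP apart_sym uniq_t apart_t).
Qed.

Theorem theorem1p3 :
  exists (V : finType) (part : V -> 'I_3) (E : {set {set V}}),
    [/\ partite_uniform part E,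
        E != set0
      & forall p q : V, nu (delete_vertices E [set p; q]) = nu E].
Proof.
exists ('I_3 * 'I_5)%type, fst, H; split.
- by apply/forall_inP => _ /imsetP[k _ ->]; apply: partite_edge_transversal.
- by apply/set0Pn; exists (edge ord0); rewrite imset_f.
- move=> p q; apply/eqP; rewrite eqn_leq nuS ?delete_vertices_subset //=.
  exact: leq_trans nu_H_le3 (nu_delete2_ge3 p q).
Qed.
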